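(* Let $m \ge 1$ and $n \ge 2m+3$ be integers, and write $p_j = n-2m+2j$. Then for every real $r$ with $|r|<1$, $$\int_{-1}^1 \frac{T_n(s)(1-s^2)^{m-\frac{1}{2}}}{(s-r)^4}\,ds = (-1)^{m+1}\left(\frac{1}{2}\right)^{2m+2}\frac{1}{3}\frac{\pi}{(1-r^2)^2}\sum_{j=0}^{2m-1}(-1)^j\binom{2m-1}{j}(p_j+1)\Big\{(p_j+2)(p_j+3)U_{p_j-2}(r)-\big[2p_j^2+4p_j-6\big]U_{p_j}(r)+p_j(p_j-1)U_{p_j+2}(r)\Big\},$$ where the integral is a Hadamard finite-part integral.
   Context: $T_k(s)=\cos(k\cos^{-1}s)$ and $U_k(s)=\frac{\sin((k+1)\cos^{-1}s)}{\sin(\cos^{-1}s)}$ are the Tchebyshev polynomials of the first and second kinds. For a positive integer $\alpha\ge 2$ and $|r|<1$, the integral $\int_{-1}^1 \frac{D(s)}{(s-r)^\alpha}ds$ is understood in the Hadamard finite-part sense; in particular it satisfies $\int_{-1}^1 \frac{D(s)}{(s-r)^{\alpha}}ds=\frac{1}{\alpha-1}\frac{d}{dr}\int_{-1}^1\frac{D(s)}{(s-r)^{\alpha-1}}ds$, where for $\alpha-1=1$ the right-hand integral is a Cauchy principal value. $\binom{a}{j}=\frac{a!}{j!(a-j)!}$. *)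

From Stdlib Require Import Reals Lra ClassicalEpsilon.
From Coquelicot Require Import Coquelicot.
Open Scope R_scope.

Definition chebT (k : nat) (s : R) : R := cos (INR k * acos s).
Definition chebU (k : nat) (s : R) : R := sin (INR (k + 1) * acos s) / sin (acos s).

Definition is_CPV (D : R -> R) (r l : R) : Prop :=
  filterlim
    (fun eps => RInt (fun s => D s / (s - r)) (-1) (r - eps)
              + RInt (fun s => D s / (s - r)) (r + eps) 1)
    (at_right 0) (locally l).

(* The principal value (0 by convention when it does not exist). *)
Definition CPV (D : R -> R) (r : R) : R :=
  match excluded_middle_informative (exists l, is_CPV D r l) with
  | left H => proj1_sig (constructive_indefinite_description _ H)
  | right _ => 0
  end.

(* hfp k D r = finite-part integral int_{-1}^1 D(s)/(s-r)^(k+1) ds, defined via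
   int D/(s-r)^a = 1/(a-1) d/dr int D/(s-r)^(a-1), base case a = 1: the CPV. *)
Fixpoint hfp (k : nat) (D : R -> R) (r : R) : R :=
  match k with
  | O => CPV D r
  | S k' => Derive (hfp k' D) r / INR (S k')
  end.

(* Density T_n(s) (1-s^2)^(m-1/2), written (1-s^2)^(m-1) sqrt(1-s^2) (m >= 1). *)
Definition dens (n m : nat) (s : R) : R :=
  chebT n s * ((1 - s ^ 2) ^ (m - 1) * sqrt (1 - s ^ 2)).

Definition pj (n m j : nat) : nat := n - 2 * m + 2 * j.

Definition rhs7 (n m : nat) (r : R) : R :=
  (-1) ^ (m + 1) * (1 / 2) ^ (2 * m + 2) * (1 / 3) * (PI / (1 - r ^ 2) ^ 2) *
  sum_f_R0 (fun j =>
     let p := pj n m j in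
     let P := INR p in
     (-1) ^ j * Binomial.C (2 * m - 1) j * (P + 1) *
     ((P + 2) * (P + 3) * chebU (p - 2) r
      - (2 * P ^ 2 + 4 * P - 6) * chebU p r
      + P * (P - 1) * chebU (p + 2) r))
    (2 * m - 1).

From Stdlib Require Import Reals Lra Lia ClassicalEpsilon.
From Coquelicot Require Import Coquelicot.
Open Scope R_scope.

(* With [s = cos t], the density is [cos (n t) sin t ^ (2m-1)], which the binomial
   theorem expands as [sum_j c_j sin ((p_j + 1) t)], i.e. a combination of the
   functions [sin (N acos s)].  For these the principal value is classical,
   [int_{-1}^1 sin (N acos s) / (s - r) ds = - PI T_N(r)]: after the substitution
   [s = cos t] the integrand has an explicit antiderivative whose only singularity
   at [t = acos r] is [B log |cos t - r|] with the same coefficient [B] on both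
   sides, so it cancels in the principal value.  Hence the principal value of the
   density is [- PI sum_j c_j T_(p_j+1)(r)], smooth on (-1, 1), and the k-th
   finite-part integral is its k-th derivative divided by k!.  Differentiating
   [T_(p+1)] three times ([T_(p+1)' = (p+1) U_p] and the derivative formula for [U],
   simplified by the three-term recurrence) gives the right-hand side. *)

(* Coquelicot often states real equalities at a structure such as [R_AbsRing];
   [ring] and [field] need them at [R]. *)
Ltac toR := match goal with |- ?a = ?b => change (@eq R a b) end.

Lemma is_derive_eq (f : R -> R) (x d d' : R) : is_derive f x d' -> d' = d -> is_derive f x d.
Proof. now intros H <-. Qed.

Lemma nat_ind2 (P : nat -> Prop) :
  P O -> P 1%nat -> (forall N, P N -> P (S N) -> P (S (S N))) -> forall N, P N.
Proof.
  intros H0 H1 HS N. enough (P N /\ P (S N)) by tauto.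
  induction N as [|N [IH1 IH2]]; auto.
Qed.

Lemma sin_SS (N : nat) (t : R) :
  sin (INR (S (S N)) * t) = 2 * cos t * sin (INR (S N) * t) - sin (INR N * t).
Proof.
  rewrite !S_INR.
  replace ((INR N + 1 + 1) * t) with ((INR N + 1) * t + t) by ring.
  replace (INR N * t) with ((INR N + 1) * t - t) by ring.
  rewrite sin_plus, sin_minus. ring.
Qed.

Lemma cos_SS (N : nat) (t : R) :
  cos (INR (S (S N)) * t) = 2 * cos t * cos (INR (S N) * t) - cos (INR N * t).
Proof.
  rewrite !S_INR.
  replace ((INR N + 1 + 1) * t) with ((INR N + 1) * t + t) by ring.
  replace (INR N * t) with ((INR N + 1) * t - t) by ring.
  rewrite cos_plus, cos_minus. ring.
Qed.

Lemma one_minus_cos_sq (t : R) : 1 - cos t ^ 2 = sin t ^ 2.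
Proof. pose proof (sin2_cos2 t). unfold Rsqr in H. simpl. lra. Qed.

(** * The density as a combination of the functions [sin (N acos s)] *)

Lemma binomial_n_0 (n : nat) : Binomial.C n 0 = 1.
Proof.
  unfold Binomial.C. rewrite Nat.sub_0_r. simpl. field. apply INR_fact_neq_0.
Qed.

Lemma binomial_n_n (n : nat) : Binomial.C n n = 1.
Proof.
  unfold Binomial.C. rewrite Nat.sub_diag. simpl. field. apply INR_fact_neq_0.
Qed.

(* [Binomial.C M i] is not zero for [i > M]; this version is. *)
Definition binomial0 (M i : nat) : R := if Nat.leb i M then Binomial.C M i else 0.

Lemma binomial0_out (M i : nat) : (M < i)%nat -> binomial0 M i = 0.
Proof. intros H. unfold binomial0. now rewrite (proj2 (Nat.leb_gt _ _) H). Qed.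

Lemma binomial0_in (M i : nat) : (i <= M)%nat -> binomial0 M i = Binomial.C M i.
Proof. intros H. unfold binomial0. now rewrite (proj2 (Nat.leb_le _ _) H). Qed.

Lemma binomial_pascal0 (M i : nat) : (i <= M)%nat ->
  Binomial.C (S M) (S i) = binomial0 M (S i) + binomial0 M i.
Proof.
  intros Hi. rewrite (binomial0_in M i Hi).
  destruct (Nat.eq_dec i M) as [->|HiM].
  - rewrite binomial0_out, !binomial_n_n by lia. ring.
  - rewrite binomial0_in, <- pascal by lia. ring.
Qed.

Lemma alt_binomial_sum_S (g : nat -> R) (M : nat) :
  sum_f_R0 (fun i => (-1) ^ i * Binomial.C (S M) i * g i) (S M) =
  sum_f_R0 (fun i => (-1) ^ i * Binomial.C M i * (g i - g (S i))) M.
Proof.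
  set (a i := (-1) ^ i * binomial0 M i).
  set (b i := match i with O => 0 | S k => a k * g i end).
  rewrite (sum_eq _ (fun i => a i * g i - b i)).
  2:{ intros [|i] Hi; unfold b, a.
      - rewrite binomial0_in, !binomial_n_0 by lia. simpl. ring.
      - rewrite binomial_pascal0 by lia. simpl. ring. }
  rewrite minus_sum, (tech5 (fun i => a i * g i)), (decomp_sum b (S M)) by lia.
  simpl pred. change (b 0%nat) with 0.
  rewrite (sum_eq (fun i => (-1) ^ i * Binomial.C M i * (g i - g (S i)))
                  (fun i => a i * g i - b (S i))).
  2:{ intros i Hi. unfold b, a. rewrite binomial0_in by lia. ring. }
  rewrite minus_sum. unfold a at 2. rewrite binomial0_out by lia. ring.
Qed.

Definition alt_sin_sum (th : R) (M : nat) (k : R) : R :=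
  sum_f_R0 (fun i => (-1) ^ i * Binomial.C M i * sin ((k - INR M + 2 * INR i) * th)) M.

Lemma alt_sin_sum_S (th : R) (M : nat) (k : R) :
  alt_sin_sum th (S M) k = alt_sin_sum th M (k - 1) - alt_sin_sum th M (k + 1).
Proof.
  unfold alt_sin_sum. rewrite alt_binomial_sum_S, <- minus_sum.
  apply sum_eq. intros i _. rewrite !S_INR.
  replace (k - (INR M + 1) + 2 * INR i) with (k - 1 - INR M + 2 * INR i) by ring.
  replace (k - (INR M + 1) + 2 * (INR i + 1)) with (k + 1 - INR M + 2 * INR i) by ring.
  ring.
Qed.

Lemma alt_sin_sum_even (th : R) (a : nat) (k : R) :
  alt_sin_sum th (2 * a) k = (-4 * sin th ^ 2) ^ a * sin (k * th).
Proof.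
  revert k. induction a as [|a IH]; intros k.
  - unfold alt_sin_sum. simpl. rewrite binomial_n_0.
    replace (k - 0 + 2 * 0) with k by ring. ring.
  - replace (2 * S a)%nat with (S (S (2 * a))) by lia.
    rewrite !alt_sin_sum_S, !IH.
    replace ((k - 1 - 1) * th) with (k * th - 2 * th) by ring.
    replace ((k - 1 + 1) * th) with (k * th) by ring.
    replace ((k + 1 - 1) * th) with (k * th) by ring.
    replace ((k + 1 + 1) * th) with (k * th + 2 * th) by ring.
    rewrite sin_minus, sin_plus, cos_2a_sin. simpl pow. ring.
Qed.

Lemma alt_sin_sum_odd (th : R) (a : nat) (k : R) :
  alt_sin_sum th (S (2 * a)) k = (-4) ^ a * (-2) * (cos (k * th) * sin th ^ S (2 * a)).
Proof.
  rewrite alt_sin_sum_S, !alt_sin_sum_even.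
  replace ((k - 1) * th) with (k * th - th) by ring.
  replace ((k + 1) * th) with (k * th + th) by ring.
  replace (sin th ^ S (2 * a)) with (sin th * (sin th ^ 2) ^ a) by (rewrite <- pow_mult; reflexivity).
  rewrite sin_minus, sin_plus, Rpow_mult_distr. ring.
Qed.

(* [chebW N s = sin (N acos s) = sqrt (1 - s^2) U_(N-1)(s)] on [-1, 1]; the
   recurrence makes it continuous on all of [R], which [acos] is not. *)
Fixpoint chebW (N : nat) (s : R) : R :=
  match N with
  | O => 0
  | S O => sqrt (1 - s ^ 2)
  | S ((S k) as k1) => 2 * s * chebW k1 s - chebW k s
  end.

Lemma chebW_cos (N : nat) (t : R) : 0 <= t <= PI -> chebW N (cos t) = sin (INR N * t).
Proof.
  intros Ht. induction N as [| |N IH1 IH2] using nat_ind2.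
  - simpl. now rewrite Rmult_0_l, sin_0.
  - change (sqrt (1 - cos t ^ 2) = sin (INR 1 * t)).
    rewrite one_minus_cos_sq, sqrt_pow2 by (apply sin_ge_0; lra).
    now rewrite Rmult_1_l.
  - rewrite sin_SS, <- IH1, <- IH2. reflexivity.
Qed.

Lemma continuous_chebW (N : nat) (s : R) : continuous (chebW N) s.
Proof.
  induction N as [| |N IH1 IH2] using nat_ind2.
  - apply continuous_const.
  - apply continuous_sqrt_comp.
    apply (continuous_minus (fun _ => 1) (fun s => s ^ 2)); [apply continuous_const|].
    apply (ex_derive_continuous (fun s => s ^ 2)). auto_derive. exact I.
  - apply (continuous_minus (fun s => 2 * s * chebW (S N) s) (chebW N)); [|exact IH1].
    apply (continuous_mult (fun s => 2 * s) (chebW (S N))); [|exact IH2].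
    apply (ex_derive_continuous (fun s => 2 * s)). auto_derive. exact I.
Qed.

Definition dens_scale (m : nat) : R := (-4) ^ (m - 1) * (-2).
Definition dens_coef (m j : nat) : R := (-1) ^ j * Binomial.C (2 * m - 1) j / dens_scale m.

Lemma dens_scale_neq_0 (m : nat) : dens_scale m <> 0.
Proof. unfold dens_scale. apply Rmult_integral_contrapositive. split; [apply pow_nonzero|]; lra. Qed.

Lemma dens_cos (n m : nat) (t : R) : (1 <= m)%nat -> 0 <= t <= PI ->
  dens n m (cos t) = cos (INR n * t) * sin t ^ (2 * m - 1).
Proof.
  intros Hm Ht. unfold dens, chebT. rewrite acos_cos, one_minus_cos_sq by exact Ht.
  rewrite sqrt_pow2 by (apply sin_ge_0; lra).
  replace (2 * m - 1)%nat with (2 * (m - 1) + 1)%nat by lia.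
  rewrite pow_add, pow_mult. ring.
Qed.

Lemma dens_chebW (n m : nat) (s : R) : (1 <= m)%nat -> (2 * m <= n)%nat -> -1 <= s <= 1 ->
  dens n m s = sum_f_R0 (fun j => dens_coef m j * chebW (S (pj n m j)) s) (2 * m - 1).
Proof.
  intros Hm Hn Hs. rewrite <- (cos_acos s Hs). pose proof (acos_bound s) as Ht.
  rewrite dens_cos by assumption.
  rewrite (sum_eq _ (fun j => (-1) ^ j * Binomial.C (2 * m - 1) j
                        * sin ((INR n - INR (2 * m - 1) + 2 * INR j) * acos s) * / dens_scale m)).
  2:{ intros j _. unfold dens_coef. rewrite chebW_cos by exact Ht.
      replace (INR (S (pj n m j))) with (INR n - INR (2 * m - 1) + 2 * INR j).
      - unfold Rdiv. ring.
      - unfold pj. rewrite S_INR, plus_INR, !minus_INR, !mult_INR by lia. simpl. ring. }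
  rewrite <- scal_sum. fold (alt_sin_sum (acos s) (2 * m - 1) (INR n)).
  replace (2 * m - 1)%nat with (S (2 * (m - 1))) by lia.
  rewrite alt_sin_sum_odd. unfold dens_scale. field. apply pow_nonzero. lra.
Qed.

(** * Principal values *)

Definition pv_sum (D : R -> R) (r e : R) : R :=
  RInt (fun s => D s / (s - r)) (-1) (r - e) + RInt (fun s => D s / (s - r)) (r + e) 1.

Lemma is_CPV_pv_sum (D : R -> R) (r l : R) :
  is_CPV D r l <-> filterlim (pv_sum D r) (at_right 0) (locally l).
Proof. reflexivity. Qed.

Lemma is_CPV_of_continuous (D g : R -> R) (r : R) (d : posreal) :
  (forall e, 0 < e < d -> pv_sum D r e = g e) -> continuous g 0 -> is_CPV D r (g 0).
Proof.
  intros Hg Hc. apply is_CPV_pv_sum, (filterlim_ext_loc g).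
  - exists d. intros e He Hpos. change (Rabs (e - 0) < d) in He.
    rewrite Rminus_0_r, Rabs_pos_eq in He by lra. symmetry. apply Hg. split; assumption.
  - apply (filterlim_filter_le_1 (F := locally 0)); [apply filter_le_within | exact Hc].
Qed.

Lemma continuous_div_sub (f : R -> R) (r z : R) : continuous f z -> z <> r ->
  continuous (fun s => f s / (s - r)) z.
Proof.
  intros Hf Hz. apply (continuous_mult f (fun s => / (s - r))); [exact Hf|].
  apply (ex_derive_continuous (fun s => / (s - r))). auto_derive. lra.
Qed.

Lemma ex_RInt_pv_pieces (f : R -> R) (r e : R) :
  (forall x, continuous f x) -> -1 < r < 1 -> 0 < e ->
  ex_RInt (fun s => f s / (s - r)) (-1) (r - e) /\ ex_RInt (fun s => f s / (s - r)) (r + e) 1.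
Proof.
  intros Hf Hr He.
  assert (Hint : forall a b, (forall z, Rmin a b <= z <= Rmax a b -> z <> r) ->
                   ex_RInt (fun s => f s / (s - r)) a b).
  { intros a b Hz. apply (@ex_RInt_continuous R_CompleteNormedModule). intros z Hz'.
    apply continuous_div_sub; [apply Hf | exact (Hz z Hz')]. }
  split; apply Hint; intros z Hz; unfold Rmin, Rmax in Hz.
  - destruct (Rle_dec (-1) (r - e)); lra.
  - destruct (Rle_dec (r + e) 1); lra.
Qed.

Lemma pv_sum_plus (f g : R -> R) (r e : R) :
  (forall x, continuous f x) -> (forall x, continuous g x) -> -1 < r < 1 -> 0 < e ->
  pv_sum (fun s => f s + g s) r e = pv_sum f r e + pv_sum g r e.
Proof.
  intros Hf Hg Hr He.
  destruct (ex_RInt_pv_pieces f r e Hf Hr He) as [Fl Fr].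
  destruct (ex_RInt_pv_pieces g r e Hg Hr He) as [Gl Gr].
  unfold pv_sum.
  rewrite !(RInt_ext (fun s => (f s + g s) / (s - r))
                     (fun s => plus (f s / (s - r)) (g s / (s - r))))
    by (intros; unfold plus; simpl; unfold Rdiv; ring).
  rewrite (RInt_plus (fun s => f s / (s - r)) (fun s => g s / (s - r)) (-1)),
    (RInt_plus (fun s => f s / (s - r)) (fun s => g s / (s - r)) (r + e)) by assumption.
  unfold plus; simpl. ring.
Qed.

Lemma pv_sum_scal (f : R -> R) (c r e : R) :
  (forall x, continuous f x) -> -1 < r < 1 -> 0 < e ->
  pv_sum (fun s => c * f s) r e = c * pv_sum f r e.
Proof.
  intros Hf Hr He. destruct (ex_RInt_pv_pieces f r e Hf Hr He) as [Fl Fr].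
  unfold pv_sum.
  rewrite !(RInt_ext (fun s => c * f s / (s - r)) (fun s => scal c (f s / (s - r))))
    by (intros; unfold scal; simpl; unfold mult; simpl; unfold Rdiv; ring).
  rewrite (RInt_scal (fun s => f s / (s - r)) (-1)),
    (RInt_scal (fun s => f s / (s - r)) (r + e)) by assumption.
  unfold scal; simpl; unfold mult; simpl. ring.
Qed.

Lemma at_right_0_pos : at_right 0 (fun e => 0 < e).
Proof. exists (mkposreal 1 Rlt_0_1). intros e _ He. exact He. Qed.

Lemma is_CPV_plus (f g : R -> R) (r a b : R) :
  (forall x, continuous f x) -> (forall x, continuous g x) -> -1 < r < 1 ->
  is_CPV f r a -> is_CPV g r b -> is_CPV (fun s => f s + g s) r (a + b).
Proof.
  rewrite !is_CPV_pv_sum. intros Hf Hg Hr Ha Hb.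
  apply (filterlim_ext_loc (fun e => pv_sum f r e + pv_sum g r e)).
  - apply (filter_imp _ _ (fun e He => eq_sym (pv_sum_plus f g r e Hf Hg Hr He)) at_right_0_pos).
  - exact (filterlim_comp_2 _ _ Rplus Ha Hb (filterlim_plus a b)).
Qed.

Lemma is_CPV_scal (f : R -> R) (c r a : R) :
  (forall x, continuous f x) -> -1 < r < 1 ->
  is_CPV f r a -> is_CPV (fun s => c * f s) r (c * a).
Proof.
  rewrite !is_CPV_pv_sum. intros Hf Hr Ha.
  apply (filterlim_ext_loc (fun e => c * pv_sum f r e)).
  - apply (filter_imp _ _ (fun e He => eq_sym (pv_sum_scal f c r e Hf Hr He)) at_right_0_pos).
  - exact (filterlim_comp _ _ _ _ (fun x => c * x) _ _ _ Ha (filterlim_scal_r c a)).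
Qed.

Lemma is_CPV_sum (F : nat -> R -> R) (L : nat -> R) (r : R) (M : nat) :
  (forall j x, continuous (F j) x) -> -1 < r < 1 -> (forall j, is_CPV (F j) r (L j)) ->
  is_CPV (fun s => sum_f_R0 (fun j => F j s) M) r (sum_f_R0 L M).
Proof.
  intros HF Hr HL.
  assert (Hcont : forall M x, continuous (fun s => sum_f_R0 (fun j => F j s) M) x).
  { intros M' x. induction M' as [|M' IH]; [apply HF|].
    apply (continuous_plus (fun s => sum_f_R0 (fun j => F j s) M') (F (S M'))); auto. }
  induction M as [|M IH]; [exact (HL 0%nat)|].
  apply (is_CPV_plus (fun s => sum_f_R0 (fun j => F j s) M) (F (S M))); auto.
Qed.

Lemma is_CPV_ext (f g : R -> R) (r l : R) : -1 < r < 1 ->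
  (forall s, -1 <= s <= 1 -> f s = g s) -> is_CPV f r l -> is_CPV g r l.
Proof.
  rewrite !is_CPV_pv_sum. intros Hr Hfg. apply filterlim_ext_loc.
  assert (Hd : 0 < Rmin (1 + r) (1 - r)) by (apply Rmin_glb_lt; lra).
  exists (mkposreal _ Hd). intros e He Hpos. change (Rabs (e - 0) < Rmin (1 + r) (1 - r)) in He.
  rewrite Rminus_0_r, Rabs_pos_eq in He by lra.
  pose proof (Rmin_l (1 + r) (1 - r)). pose proof (Rmin_r (1 + r) (1 - r)).
  unfold pv_sum. f_equal; apply RInt_ext; intros x Hx; unfold Rmin, Rmax in Hx.
  - destruct (Rle_dec (-1) (r - e)); rewrite Hfg by lra; reflexivity.
  - destruct (Rle_dec (r + e) 1); rewrite Hfg by lra; reflexivity.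
Qed.

Lemma CPV_eq (D : R -> R) (r l : R) : is_CPV D r l -> CPV D r = l.
Proof.
  intros H. unfold CPV. destruct (excluded_middle_informative _) as [H'|H'].
  - destruct (constructive_indefinite_description _ H') as [l' Hl']. simpl.
    exact (filterlim_locally_unique _ l' l Hl' H).
  - exfalso. apply H'. exists l. exact H.
Qed.

(** * An antiderivative across the singularity *)

(* [shift_gap r t = 1 - cos (t + acos r)], written without [acos]. *)
Definition shift_gap (r t : R) : R := 1 - r * cos t + sqrt (1 - r ^ 2) * sin t.

Lemma sqrt_one_minus_sq (r : R) : -1 < r < 1 -> sqrt (1 - r ^ 2) ^ 2 = 1 - r ^ 2.
Proof. intros Hr. apply pow2_sqrt. nra. Qed.

Lemma shift_gap_pos (r t : R) : -1 < r < 1 -> 0 <= t <= PI -> 0 < shift_gap r t.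
Proof.
  intros Hr Ht. unfold shift_gap.
  assert (Hq : 0 < sqrt (1 - r ^ 2)) by (apply sqrt_lt_R0; nra).
  pose proof (sin_ge_0 t ltac:(lra) ltac:(lra)). pose proof (COS_bound t).
  assert (r * cos t < 1) by (destruct (Rle_dec 0 r); nra). nra.
Qed.

Lemma is_derive_ln_shift_gap (r t : R) : -1 < r < 1 -> 0 <= t <= PI -> cos t <> r ->
  is_derive (fun t => ln (shift_gap r t)) t ((sqrt (1 - r ^ 2) - sin t) / (cos t - r)).
Proof.
  intros Hr Ht Hc. pose proof (shift_gap_pos r t Hr Ht) as HE.
  unfold shift_gap in *. auto_derive; [exact HE|]. toR.
  pose proof (sqrt_one_minus_sq r Hr) as Hq. pose proof (sin2_cos2 t) as Hsc. unfold Rsqr in Hsc.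
  replace (1 - r * (r * 1)) with (1 - r ^ 2) by ring.
  set (q := sqrt (1 - r ^ 2)) in *.
  assert (cos t - r <> 0) by lra.
  field_simplify_eq; [|split; lra].
  (* the two sides differ by [q (s^2 + c^2 - 1) + s (1 - r^2 - q^2)] *)
  assert (H1 : q * (sin t * sin t + cos t * cos t) = q * 1) by now rewrite Hsc.
  assert (H2 : sin t * q ^ 2 = sin t * (1 - r ^ 2)) by now rewrite Hq.
  lra.
Qed.

Definition prim_cos (k : nat) (t : R) : R :=
  match k with O => t | _ => sin (INR k * t) / INR k end.

Lemma is_derive_prim_cos (k : nat) (t : R) : is_derive (prim_cos k) t (cos (INR k * t)).
Proof.
  destruct k as [|k].
  - unfold prim_cos. auto_derive; [exact I|]. simpl. now rewrite Rmult_0_l, cos_0.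
  - change (prim_cos (S k)) with (fun t => sin (INR (S k) * t) / INR (S k)).
    assert (Hk : INR (S k) <> 0) by (apply not_0_INR; lia).
    set (a := INR (S k)) in *. auto_derive; [exact I|]. toR. field. exact Hk.
Qed.

Definition prim_sin_sin (k : nat) (t : R) : R := (prim_cos (S (S k)) t - prim_cos k t) / 2.

Lemma is_derive_prim_sin_sin (k : nat) (t : R) :
  is_derive (prim_sin_sin k) t (- sin t * sin (INR (S k) * t)).
Proof.
  unfold prim_sin_sin.
  apply (is_derive_ext (fun t => / 2 * (prim_cos (S (S k)) t - prim_cos k t))).
  { intros u. toR. field. }
  eapply is_derive_eq.
  - apply is_derive_scal, (is_derive_minus (prim_cos _) (prim_cos _)); apply is_derive_prim_cos.
  - rewrite !S_INR. unfold minus, plus, opp; simpl.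
    replace ((INR k + 1 + 1) * t) with ((INR k + 1) * t + t) by ring.
    replace (INR k * t) with ((INR k + 1) * t - t) by ring.
    rewrite cos_plus, cos_minus. field.
Qed.

Lemma prim_sin_sin_ends (k : nat) :
  prim_sin_sin k 0 - prim_sin_sin k PI = match k with O => PI / 2 | _ => 0 end.
Proof.
  assert (Hsin : forall j, sin (INR j * PI) = 0).
  { intros j. apply sin_eq_0_1. exists (Z.of_nat j). now rewrite <- INR_IZR_INZ. }
  unfold prim_sin_sin, prim_cos. rewrite !Rmult_0_r, !sin_0, !Hsin.
  destruct k; field; try split; apply not_0_INR; lia.
Qed.

(* The part of [pv_prim] that is continuous across [t = acos r]; it follows the
   recurrence of [sin (N t)] from the case [N = 1]. *)
Fixpoint pv_prim_reg (r : R) (N : nat) (t : R) : R :=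
  match N with
  | O => 0
  | S O => sin t + r * t - sqrt (1 - r ^ 2) * ln (shift_gap r t)
  | S ((S k) as k1) => 2 * prim_sin_sin k t + 2 * r * pv_prim_reg r k1 t - pv_prim_reg r k t
  end.

Definition pv_prim (r : R) (N : nat) (t : R) : R :=
  pv_prim_reg r N t + chebW N r * (ln ((cos t - r) ^ 2) / 2).

Lemma pv_prim_SS (r : R) (N : nat) (t : R) :
  pv_prim r (S (S N)) t = 2 * prim_sin_sin N t + 2 * r * pv_prim r (S N) t - pv_prim r N t.
Proof. unfold pv_prim. cbn [pv_prim_reg chebW]. ring. Qed.

Lemma is_derive_pv_prim_1 (r t : R) : -1 < r < 1 -> 0 <= t <= PI -> cos t <> r ->
  is_derive (pv_prim r 1) t (- sin t * sin (INR 1 * t) / (cos t - r)).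
Proof.
  intros Hr Ht Hc. set (q := sqrt (1 - r ^ 2)).
  apply (is_derive_ext
    (fun t => sin t + r * t + q * (ln ((cos t - r) ^ 2) / 2) - q * ln (shift_gap r t))).
  { intros u. unfold pv_prim. cbn [pv_prim_reg chebW]. fold q. toR. ring. }
  assert (Hcr : cos t - r <> 0) by lra.
  assert (H1 : is_derive (fun t => sin t + r * t + q * (ln ((cos t - r) ^ 2) / 2)) t
                 (cos t + r - q * sin t / (cos t - r))).
  { auto_derive; [apply pow2_gt_0, Hcr|]. field. exact Hcr. }
  assert (H2 : is_derive (fun t => q * ln (shift_gap r t)) t
                 (q * ((q - sin t) / (cos t - r)))).
  { apply is_derive_scal, is_derive_ln_shift_gap; assumption. }
  eapply is_derive_eq; [exact (is_derive_minus _ _ _ _ _ H1 H2)|].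
  pose proof (sqrt_one_minus_sq r Hr) as Hq. fold q in Hq.
  pose proof (sin2_cos2 t) as Hsc. unfold Rsqr in Hsc.
  unfold minus, plus, opp; simpl. field_simplify_eq; [|exact Hcr].
  rewrite Rmult_1_l, Hq. nra.
Qed.

Lemma is_derive_pv_prim (r : R) (N : nat) (t : R) : -1 < r < 1 -> 0 <= t <= PI -> cos t <> r ->
  is_derive (pv_prim r N) t (- sin t * sin (INR N * t) / (cos t - r)).
Proof.
  intros Hr Ht Hc. assert (Hcr : cos t - r <> 0) by lra.
  induction N as [| |N IH0 IH1] using nat_ind2.
  - apply (is_derive_ext (fun _ => 0)).
    { intros u. unfold pv_prim. simpl. toR. ring. }
    eapply is_derive_eq; [apply is_derive_const|].
    simpl. rewrite Rmult_0_l, sin_0. unfold zero. simpl. field. exact Hcr.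
  - apply is_derive_pv_prim_1; assumption.
  - apply (is_derive_ext (fun u => 2 * prim_sin_sin N u + 2 * r * pv_prim r (S N) u - pv_prim r N u)).
    { intros u. now rewrite pv_prim_SS. }
    eapply is_derive_eq.
    + apply (is_derive_minus _ (pv_prim r N)); [|exact IH0].
      apply (is_derive_plus (fun u => 2 * prim_sin_sin N u)).
      * apply is_derive_scal, is_derive_prim_sin_sin.
      * apply is_derive_scal, IH1.
    + rewrite sin_SS. unfold minus, plus, opp; simpl. field. exact Hcr.
Qed.

Lemma continuous_pv_prim_reg (r : R) (N : nat) (t : R) : -1 < r < 1 -> 0 <= t <= PI ->
  continuous (pv_prim_reg r N) t.
Proof.
  intros Hr Ht. induction N as [| |N IH0 IH1] using nat_ind2.
  - apply continuous_const.
  - apply (ex_derive_continuous (pv_prim_reg r 1)). pose proof (shift_gap_pos r t Hr Ht) as HE.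
    unfold pv_prim_reg, shift_gap in *. auto_derive. exact HE.
  - apply (continuous_minus (fun u => 2 * prim_sin_sin N u + 2 * r * pv_prim_reg r (S N) u)); [|exact IH0].
    apply (continuous_plus (fun u => 2 * prim_sin_sin N u)).
    + apply (continuous_scal_r 2 (prim_sin_sin N)), ex_derive_continuous.
      eexists. apply is_derive_prim_sin_sin.
    + apply (continuous_scal_r (2 * r) (pv_prim_reg r (S N))), IH1.
Qed.

(* The correction at [N = 0] lets the recurrence start there. *)
Lemma pv_prim_ends (r : R) (N : nat) : -1 < r < 1 ->
  pv_prim r N 0 - pv_prim r N PI
  = - PI * cos (INR N * acos r) + match N with O => PI | _ => 0 end.
Proof.
  intros Hr. pose proof (cos_acos r ltac:(lra)) as Hc.
  induction N as [| |N IH0 IH1] using nat_ind2.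
  - unfold pv_prim. simpl. rewrite (Rmult_0_l (acos r)), cos_0. ring.
  - unfold pv_prim. cbn [pv_prim_reg chebW]. unfold shift_gap.
    rewrite sin_0, sin_PI, cos_0, cos_PI. simpl INR. rewrite Rmult_1_l, Hc.
    replace (1 - r * 1 + sqrt (1 - r ^ 2) * 0) with (1 - r) by ring.
    replace (1 - r * -1 + sqrt (1 - r ^ 2) * 0) with (1 + r) by ring.
    replace ((-1 - r) ^ 2) with ((1 + r) ^ 2) by ring.
    rewrite !ln_pow by lra. simpl INR. field.
  - rewrite !pv_prim_SS.
    transitivity (2 * (prim_sin_sin N 0 - prim_sin_sin N PI)
                  + 2 * r * (pv_prim r (S N) 0 - pv_prim r (S N) PI)
                  - (pv_prim r N 0 - pv_prim r N PI)); [ring|].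
    rewrite prim_sin_sin_ends, IH0, IH1, cos_SS, Hc. destruct N; field.
Qed.

Lemma continuous_acos (x : R) : -1 < x < 1 -> continuous acos x.
Proof.
  intros Hx. apply continuity_pt_filterlim, derivable_continuous_pt, derivable_pt_acos, Hx.
Qed.

Lemma RInt_chebW_div (r : R) (N : nat) (a b : R) :
  -1 < r < 1 -> 0 <= a <= PI -> 0 <= b <= PI ->
  (forall t, Rmin a b <= t <= Rmax a b -> cos t <> r) ->
  RInt (fun s => chebW N s / (s - r)) (cos a) (cos b) = pv_prim r N b - pv_prim r N a.
Proof.
  intros Hr Ha Hb Hc.
  assert (Hab : forall t, Rmin a b <= t <= Rmax a b -> 0 <= t <= PI).
  { intros t Ht. unfold Rmin, Rmax in Ht. destruct (Rle_dec a b); lra. }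
  assert (Hsubst : is_RInt (fun t => scal (- sin t) (chebW N (cos t) / (cos t - r))) a b
                     (RInt (fun s => chebW N s / (s - r)) (cos a) (cos b))).
  { apply (is_RInt_comp (fun s => chebW N s / (s - r)) cos (fun t => - sin t)).
    - intros t Ht. apply continuous_div_sub; [apply continuous_chebW | exact (Hc t Ht)].
    - intros t _. split.
      + auto_derive; [exact I|]. ring.
      + apply (ex_derive_continuous (fun t => - sin t)). auto_derive. exact I. }
  assert (Hftc : is_RInt (fun t => - sin t * sin (INR N * t) / (cos t - r)) a b
                   (minus (pv_prim r N b) (pv_prim r N a))).
  { apply (is_RInt_derive (pv_prim r N)).
    - intros t Ht. apply is_derive_pv_prim; auto.
    - intros t Ht. specialize (Hc t Ht).
      apply (ex_derive_continuous (fun t => - sin t * sin (INR N * t) / (cos t - r))).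
      auto_derive. lra. }
  rewrite <- (is_RInt_unique _ _ _ _ Hsubst). apply is_RInt_unique.
  apply (is_RInt_ext (fun t => - sin t * sin (INR N * t) / (cos t - r))); [|exact Hftc].
  intros t Ht. assert (Ht' : Rmin a b <= t <= Rmax a b) by lra.
  rewrite chebW_cos by (apply Hab, Ht'). specialize (Hc t Ht').
  unfold scal; simpl; unfold mult; simpl. field. lra.
Qed.

Lemma pv_sum_chebW (N : nat) (r e : R) : 0 < e -> -1 < r - e -> r + e < 1 ->
  pv_sum (chebW N) r e
  = (pv_prim r N 0 - pv_prim r N PI) + (pv_prim r N (acos (r - e)) - pv_prim r N (acos (r + e))).
Proof.
  intros He H1 H2.
  pose proof (acos_bound (r - e)) as Hb1. pose proof (acos_bound (r + e)) as Hb2.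
  pose proof (cos_acos (r - e) ltac:(lra)) as Hc1. pose proof (cos_acos (r + e) ltac:(lra)) as Hc2.
  set (t1 := acos (r - e)) in *. set (t2 := acos (r + e)) in *.
  pose proof PI_RGT_0.
  unfold pv_sum. rewrite <- Hc1, <- Hc2, <- cos_PI, <- cos_0.
  assert (Hleft : forall t, Rmin PI t1 <= t <= Rmax PI t1 -> cos t <> r).
  { rewrite Rmin_right, Rmax_left by lra. intros t Ht.
    pose proof (cos_decr_1 t1 t ltac:(lra) ltac:(lra) ltac:(lra) ltac:(lra) ltac:(lra)). lra. }
  assert (Hright : forall t, Rmin t2 0 <= t <= Rmax t2 0 -> cos t <> r).
  { rewrite Rmin_right, Rmax_left by lra. intros t Ht.
    pose proof (cos_decr_1 t t2 ltac:(lra) ltac:(lra) ltac:(lra) ltac:(lra) ltac:(lra)). lra. }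
  rewrite (RInt_chebW_div r N PI t1), (RInt_chebW_div r N t2 0) by (assumption || lra).
  ring.
Qed.

Lemma continuous_pv_prim_reg_acos (r : R) (N : nat) (f : R -> R) (x : R) :
  -1 < r < 1 -> continuous f x -> -1 < f x < 1 ->
  continuous (fun y => pv_prim_reg r N (acos (f y))) x.
Proof.
  intros Hr Hf Hfx. apply (continuous_comp f (fun y => pv_prim_reg r N (acos y)) x Hf).
  apply (continuous_comp acos (pv_prim_reg r N)); [now apply continuous_acos|].
  apply continuous_pv_prim_reg, acos_bound. exact Hr.
Qed.

Lemma is_CPV_chebW (N : nat) (r : R) : -1 < r < 1 ->
  is_CPV (chebW (S N)) r (- PI * cos (INR (S N) * acos r)).
Proof.
  intros Hr.
  set (g e := pv_prim_reg r (S N) (acos (r - e)) - pv_prim_reg r (S N) (acos (r + e))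
              - PI * cos (INR (S N) * acos r)).
  replace (- PI * cos (INR (S N) * acos r)) with (g 0)
    by (unfold g; rewrite Rminus_0_r, Rplus_0_r; ring).
  assert (Hd : 0 < Rmin (1 + r) (1 - r)) by (apply Rmin_glb_lt; lra).
  apply (is_CPV_of_continuous _ g r (mkposreal _ Hd)).
  - intros e [He0 He]. simpl in He.
    pose proof (Rmin_l (1 + r) (1 - r)). pose proof (Rmin_r (1 + r) (1 - r)).
    rewrite pv_sum_chebW, pv_prim_ends by lra.
    unfold pv_prim, g. rewrite !cos_acos by lra.
    replace ((r - e - r) ^ 2) with ((r + e - r) ^ 2) by ring. ring.
  - apply (continuous_minus (fun e => pv_prim_reg r (S N) (acos (r - e))
                                      - pv_prim_reg r (S N) (acos (r + e)))); [|apply continuous_const].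
    apply (continuous_minus (fun e => pv_prim_reg r (S N) (acos (r - e)))).
    + apply continuous_pv_prim_reg_acos; [exact Hr | | simpl; lra].
      apply (ex_derive_continuous (fun e => r - e)). auto_derive. exact I.
    + apply continuous_pv_prim_reg_acos; [exact Hr | | simpl; lra].
      apply (ex_derive_continuous (fun e => r + e)). auto_derive. exact I.
Qed.

(** * Derivatives of Tchebyshev polynomials *)

Lemma sin_acos_pos (x : R) : -1 < x < 1 -> 0 < sin (acos x).
Proof. intros Hx. apply sin_gt_0; apply acos_bound_lt; exact Hx. Qed.

Lemma sin_acos_sq (x : R) : -1 < x < 1 -> sin (acos x) ^ 2 = 1 - x ^ 2.
Proof. intros Hx. rewrite <- (cos_acos x) at 2 by lra. rewrite <- one_minus_cos_sq. reflexivity. Qed.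

Lemma is_derive_acos (x : R) : -1 < x < 1 -> is_derive acos x (-1 / sin (acos x)).
Proof.
  intros Hx. rewrite sin_acos by lra. apply is_derive_Reals.
  apply (derive_pt_eq_1 _ _ _ (derivable_pt_acos x Hx)), derive_pt_acos.
Qed.

Lemma is_derive_chebT (N : nat) (x : R) : -1 < x < 1 ->
  is_derive (chebT (S N)) x (INR (S N) * chebU N x).
Proof.
  intros Hx. pose proof (sin_acos_pos x Hx). unfold chebT, chebU. rewrite Nat.add_1_r.
  set (A := INR (S N)).
  eapply is_derive_eq.
  - apply (is_derive_comp (fun t => cos (A * t)) acos x (- A * sin (A * acos x)));
      [|now apply is_derive_acos].
    auto_derive; [exact I|]. toR. ring.
  - unfold scal; simpl; unfold mult; simpl. field. lra.
Qed.

Lemma chebU_rec (k : nat) (x : R) : -1 < x < 1 ->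
  2 * x * chebU (S k) x = chebU (S (S k)) x + chebU k x.
Proof.
  intros Hx. pose proof (sin_acos_pos x Hx). unfold chebU.
  rewrite <- (cos_acos x) at 1 by lra. rewrite !Nat.add_1_r, (sin_SS (S k)). field. lra.
Qed.

Definition dchebU (p : nat) (x : R) : R :=
  ((INR p + 2) * chebU (p - 1) x - INR p * chebU (p + 1) x) / (2 * (1 - x ^ 2)).

Lemma is_derive_chebU (p : nat) (x : R) : (1 <= p)%nat -> -1 < x < 1 ->
  is_derive (chebU p) x (dchebU p x).
Proof.
  intros Hp Hx. destruct p as [|k]; [lia|].
  pose proof (sin_acos_pos x Hx). pose proof (sin_acos_sq x Hx) as Hs2.
  pose proof (cos_acos x ltac:(lra)) as Hc.
  unfold dchebU, chebU. replace (S k - 1)%nat with k by lia.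
  set (A := INR (S k + 1)).
  replace (INR (k + 1)) with (A - 1) by (unfold A; rewrite !plus_INR, S_INR; ring).
  replace (INR (S k + 1 + 1)) with (A + 1) by (unfold A; rewrite !plus_INR; simpl; ring).
  replace (INR (S k)) with (A - 1) by (unfold A; rewrite plus_INR; simpl; ring).
  eapply is_derive_eq.
  - apply (is_derive_comp (fun t => sin (A * t) / sin t) acos x
             ((A * cos (A * acos x) * sin (acos x) - sin (A * acos x) * cos (acos x))
              / sin (acos x) ^ 2));
      [|now apply is_derive_acos].
    auto_derive; [lra|]. toR. field. lra.
  - rewrite <- Hs2.
    replace ((A + 1) * acos x) with (A * acos x + acos x) by ring.
    replace ((A - 1) * acos x) with (A * acos x - acos x) by ring.
    rewrite sin_plus, sin_minus, Hc. unfold scal; simpl; unfold mult; simpl. field. lra.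
Qed.

Definition d2chebU (p : nat) (x : R) : R :=
  ((INR p + 2) * (INR p + 3) * chebU (p - 2) x
   - (2 * INR p ^ 2 + 4 * INR p - 6) * chebU p x
   + INR p * (INR p - 1) * chebU (p + 2) x) / (4 * (1 - x ^ 2) ^ 2).

Lemma is_derive_dchebU (p : nat) (x : R) : (2 <= p)%nat -> -1 < x < 1 ->
  is_derive (dchebU p) x (d2chebU p x).
Proof.
  intros Hp Hx. assert (Hw : 1 - x ^ 2 <> 0) by nra.
  destruct p as [|[|a]]; [lia|lia|].
  eapply is_derive_eq.
  - apply (is_derive_div (fun x => (INR (S (S a)) + 2) * chebU (S (S a) - 1) x
                                   - INR (S (S a)) * chebU (S (S a) + 1) x)
                         (fun x => 2 * (1 - x ^ 2))).
    + apply (is_derive_minus (fun x => (INR (S (S a)) + 2) * chebU (S (S a) - 1) x));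
        apply is_derive_scal, is_derive_chebU; (lia || exact Hx).
    + auto_derive; [exact I|]. reflexivity.
    + nra.
  - unfold dchebU, d2chebU.
    replace (S (S a) - 1)%nat with (S a) by lia. replace (S (S a) - 2)%nat with a by lia.
    replace (S a - 1)%nat with a by lia. replace (S (S a) + 1)%nat with (S (S (S a))) by lia.
    replace (S a + 1)%nat with (S (S a)) by lia. replace (S (S (S a)) - 1)%nat with (S (S a)) by lia.
    replace (S (S (S a)) + 1)%nat with (S (S (S (S a)))) by lia.
    replace (S (S a) + 2)%nat with (S (S (S (S a)))) by lia.
    pose proof (chebU_rec a x Hx) as R1. pose proof (chebU_rec (S (S a)) x Hx) as R2.
    change (minus ?u ?v) with (u - v).
    set (P := INR (S (S a))).
    assert (E : ((P + 2) * chebU (S a) x - P * chebU (S (S (S a))) x)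
                * (2 * - (1 * ((1 + 1) * (x * 1))))
                = -2 * ((P + 2) * (chebU (S (S a)) x + chebU a x)
                        - P * (chebU (S (S (S (S a)))) x + chebU (S (S a)) x))).
    { rewrite <- R1, <- R2. ring. }
    rewrite E. unfold P. rewrite !S_INR. field. exact Hw.
Qed.

(* [dchebT k p] is the [k]-th derivative of [chebT (S p)], for [k <= 3]. *)
Definition dchebT (k p : nat) (x : R) : R :=
  match k with
  | O => chebT (S p) x
  | 1%nat => INR (S p) * chebU p x
  | 2%nat => INR (S p) * dchebU p x
  | _ => INR (S p) * d2chebU p x
  end.

Lemma is_derive_dchebT (k p : nat) (x : R) : (k <= 2)%nat -> (2 <= p)%nat -> -1 < x < 1 ->
  is_derive (dchebT k p) x (dchebT (S k) p x).
Proof.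
  intros Hk Hp Hx. destruct k as [|[|[|k]]]; [| | |lia]; simpl dchebT.
  - apply is_derive_chebT, Hx.
  - apply is_derive_scal, is_derive_chebU; [lia|exact Hx].
  - apply is_derive_scal, is_derive_dchebU; [lia|exact Hx].
Qed.

(** * Finite-part integrals of the density *)

Definition cheb_comb (n m : nat) (F : nat -> R -> R) (x : R) : R :=
  sum_f_R0 (fun j => dens_coef m j * F (pj n m j) x) (2 * m - 1).

Lemma is_derive_cheb_comb (n m : nat) (F F' : nat -> R -> R) (x : R) :
  (forall j, is_derive (F (pj n m j)) x (F' (pj n m j) x)) ->
  is_derive (cheb_comb n m F) x (cheb_comb n m F' x).
Proof.
  intros HF. unfold cheb_comb. induction (2 * m - 1)%nat as [|M IH].
  - apply is_derive_scal, HF.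
  - apply (is_derive_plus (fun x => sum_f_R0 (fun j => dens_coef m j * F (pj n m j) x) M)); [exact IH|].
    apply is_derive_scal, HF.
Qed.

Lemma is_CPV_dens (n m : nat) (r : R) : (1 <= m)%nat -> (2 * m <= n)%nat -> -1 < r < 1 ->
  is_CPV (dens n m) r (cheb_comb n m (fun p x => - PI * chebT (S p) x) r).
Proof.
  intros Hm Hn Hr.
  apply (is_CPV_ext (fun s => sum_f_R0 (fun j => dens_coef m j * chebW (S (pj n m j)) s) (2 * m - 1)));
    [exact Hr | intros s Hs; symmetry; apply dens_chebW; assumption |].
  apply (is_CPV_sum (fun j s => dens_coef m j * chebW (S (pj n m j)) s)); [|exact Hr|].
  - intros j x. apply (continuous_scal_r (dens_coef m j) (chebW _)), continuous_chebW.
  - intros j. apply is_CPV_scal; [apply continuous_chebW | exact Hr |].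
    apply is_CPV_chebW, Hr.
Qed.

Lemma hfp_S_of_derive (k : nat) (D g g' : R -> R) :
  (forall x, -1 < x < 1 -> hfp k D x = g x / INR (Factorial.fact k)) ->
  (forall x, -1 < x < 1 -> is_derive g x (g' x)) ->
  (forall x, -1 < x < 1 -> ex_derive (hfp k D) x)
  /\ (forall x, -1 < x < 1 -> hfp (S k) D x = g' x / INR (Factorial.fact (S k))).
Proof.
  intros Hk Hg. pose proof (INR_fact_neq_0 k) as Hfk.
  assert (Hloc : forall x, -1 < x < 1 -> locally x (fun y => g y / INR (Factorial.fact k) = hfp k D y)).
  { intros x Hx. apply (locally_interval _ x (-1) 1); simpl; try lra.
    intros y H1 H2. symmetry. apply Hk. simpl in *. lra. }
  assert (Hder : forall x, -1 < x < 1 ->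
            is_derive (hfp k D) x (g' x / INR (Factorial.fact k))).
  { intros x Hx. apply (is_derive_ext_loc _ _ _ _ (Hloc x Hx)).
    apply (is_derive_ext (fun y => / INR (Factorial.fact k) * g y)); [intros y; toR; field; exact Hfk|].
    eapply is_derive_eq; [apply is_derive_scal, Hg, Hx|]. field. exact Hfk. }
  split; intros x Hx.
  - eexists. apply Hder, Hx.
  - change (Derive (hfp k D) x / INR (S k) = g' x / INR (Factorial.fact (S k))).
    rewrite (is_derive_unique _ _ _ (Hder x Hx)), fact_simpl, mult_INR. field.
    split; [exact Hfk | apply not_0_INR; lia].
Qed.

Lemma rhs7_scale (m : nat) : (1 <= m)%nat ->
  (-1) ^ (m + 1) * (1 / 2) ^ (2 * m + 2) = -1 / 8 / dens_scale m.
Proof.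
  intros Hm. destruct m as [|k]; [lia|]. unfold dens_scale.
  replace (S k - 1)%nat with k by lia.
  replace (S k + 1)%nat with (k + 2)%nat by lia.
  replace (2 * S k + 2)%nat with (2 * (k + 2))%nat by lia.
  rewrite pow_mult, <- Rpow_mult_distr, !pow_add.
  replace ((-1) * (1 / 2) ^ 2) with (/ -4) by field.
  rewrite pow_inv. field. apply pow_nonzero. lra.
Qed.

Lemma cheb_comb_dchebT_3 (n m : nat) (r : R) : (1 <= m)%nat -> -1 < r < 1 ->
  cheb_comb n m (fun p x => - PI * dchebT 3 p x) r / INR (Factorial.fact 3) = rhs7 n m r.
Proof.
  intros Hm Hr. assert (Hw : 1 - r ^ 2 <> 0) by nra. pose proof (dens_scale_neq_0 m).
  unfold cheb_comb, rhs7. rewrite rhs7_scale by exact Hm.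
  unfold Rdiv at 1. rewrite Rmult_comm, !scal_sum.
  apply sum_eq. intros j _. unfold dens_coef, dchebT, d2chebU. rewrite S_INR.
  simpl (INR (Factorial.fact 3)). field. split; assumption.
Qed.

Theorem mainTheorem7 (m n : nat) (r : R) :
  (1 <= m)%nat -> (2 * m + 3 <= n)%nat -> Rabs r < 1 ->
  (exists l, is_CPV (dens n m) r l) /\
  ex_derive (hfp 0 (dens n m)) r /\
  ex_derive (hfp 1 (dens n m)) r /\
  ex_derive (hfp 2 (dens n m)) r /\
  hfp 3 (dens n m) r = rhs7 n m r.
Proof.
  intros Hm Hn Hr. apply Rabs_def2 in Hr. assert (Hr' : -1 < r < 1) by lra.
  set (G k := cheb_comb n m (fun p x => - PI * dchebT k p x)).
  assert (HG : forall k x, (k <= 2)%nat -> -1 < x < 1 -> is_derive (G k) x (G (S k) x)).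
  { intros k x Hk Hx. apply is_derive_cheb_comb. intros j.
    apply is_derive_scal, is_derive_dchebT; [exact Hk | unfold pj; lia | exact Hx]. }
  assert (H0 : forall x, -1 < x < 1 -> hfp 0 (dens n m) x = G 0%nat x / INR (Factorial.fact 0)).
  { intros x Hx. simpl. rewrite (CPV_eq _ _ _ (is_CPV_dens n m x Hm ltac:(lia) Hx)). unfold G. simpl. field. }
  destruct (hfp_S_of_derive 0 _ _ _ H0 (fun x => HG 0%nat x ltac:(lia))) as [D0 H1].
  destruct (hfp_S_of_derive 1 _ _ _ H1 (fun x => HG 1%nat x ltac:(lia))) as [D1 H2].
  destruct (hfp_S_of_derive 2 _ _ _ H2 (fun x => HG 2%nat x ltac:(lia))) as [D2 H3].
  split; [exists (G 0%nat r); apply is_CPV_dens; (assumption || lia)|].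
  split; [now apply D0|]. split; [now apply D1|]. split; [now apply D2|].
  rewrite H3 by exact Hr'. apply cheb_comb_dchebT_3; assumption.
Qed.
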